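(* Let $G$ be a finite simple graph on $[n]$, $w:E(G)\to\mathbb Z_{>0}$ a weight function, $\Bbbk$ a field, $S=\Bbbk[x_1,\ldots,x_n]$ and $I(G_w)=\big((x_ix_j)^{w(i,j)}\mid\{i,j\}\in E(G)\big)$. Assume $J=\sqrt{I(G_w):x^{\mathbf a}}$ is an associated radical of $I(G_w)$ and $K$ is an associated radical of $J$. Then $K$ is also an associated radical of $I(G_w)$.
   Context: For a monomial ideal $I$, an associated radical of $I$ is an ideal of the form $\sqrt{I:f}$ with $f$ a monomial not in $I$. *)

From HB Require Import structures.
From mathcomp Require Import all_boot all_order all_algebra.
From mathcomp Require Import mpoly.
Set Implicit Arguments. Unset Strict Implicit. Unset Printing Implicit Defensive.
Import GRing.Theory.
Local Open Scope ring_scope.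

Definition ideal_of (k : fieldType) (n : nat) := {mpoly k[n]} -> Prop.

Definition colon (k : fieldType) (n : nat) (I : ideal_of k n) (f : {mpoly k[n]})
  : ideal_of k n := fun p => I (p * f).

Definition radical (k : fieldType) (n : nat) (I : ideal_of k n) : ideal_of k n :=
  fun p => exists m : nat, I (p ^+ m).

Definition assoc_radical (k : fieldType) (n : nat) (I K : ideal_of k n) : Prop :=
  exists a : 'X_{1..n}, ~ I 'X_[a] /\ forall p, K p <-> radical (colon I 'X_[a]) p.

Definition weighted_edge_ideal (k : fieldType) (n : nat) (e : rel 'I_n)
  (w : 'I_n -> 'I_n -> nat) : ideal_of k n :=
  fun p => exists c : 'I_n -> 'I_n -> {mpoly k[n]},
    p = \sum_(i < n) \sum_(j < n | e i j) c i j * ('X_i * 'X_j) ^+ (w i j).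

From mathcomp Require Import all_boot all_order all_algebra.
From mathcomp Require Import mpoly.
Set Implicit Arguments. Unset Strict Implicit. Unset Printing Implicit Defensive.
Import GRing.Theory.
Local Open Scope ring_scope.

(* The statement holds for every monomial ideal I.  If every generator of I has all exponents at most B, then divisibility
   of a monomial by a generator only sees its exponents truncated at B, so
   I : x^(c + d) = I : x^c as soon as c_i >= B wherever d_i > 0.  For N > B this
   gives sqrt(sqrt(I : x^a) : x^b) = sqrt(I : x^(a + N b)), and x^(a + N b) is not
   in I because x^b is not in sqrt(I : x^a). *)

Lemma assoc_radical_ext (k : fieldType) (n : nat) (I I' K : ideal_of k n) :
  (forall p, I p <-> I' p) -> assoc_radical I K -> assoc_radical I' K.
Proof.
move=> II' [a [nIa HK]]; exists a; split; first by rewrite -II'.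
by move=> p; rewrite HK; split=> -[m]; exists m; apply/II'.
Qed.

Lemma exprMX_mulX (k : fieldType) (n : nat) (p : {mpoly k[n]}) (a b : 'X_{1..n}) m l :
  (p ^+ m * 'X_[b]) ^+ l * 'X_[a] = p ^+ (m * l) * 'X_[a + b *+ l].
Proof. by rewrite exprMn -exprM mpolyXn -mulrA -mpolyXD addmC. Qed.

Section MonomialIdeal.
Variables (k : fieldType) (n : nat) (T : finType) (P : pred T) (g : T -> 'X_{1..n}).

Definition monomial_ideal : ideal_of k n :=
  fun p => exists c : T -> {mpoly k[n]}, p = \sum_(t | P t) c t * 'X_[g t].

Local Notation I := monomial_ideal.

Lemma monomial_ideal0 : I 0.
Proof. by exists (fun=> 0); rewrite big1 // => t _; rewrite mul0r. Qed.

Lemma monomial_idealD p q : I p -> I q -> I (p + q).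
Proof.
move=> [c ->] [d ->]; exists (fun t => c t + d t).
by rewrite -big_split; apply: eq_bigr => t _; rewrite mulrDl.
Qed.

Lemma monomial_idealMl h p : I p -> I (h * p).
Proof.
move=> [c ->]; exists (fun t => h * c t).
by rewrite mulr_sumr; apply: eq_bigr => t _; rewrite mulrA.
Qed.

Lemma monomial_idealX t m : P t -> (g t <= m)%MM -> I 'X_[m].
Proof.
move=> Pt le_gm; rewrite -(submK le_gm) mpolyXD; apply: monomial_idealMl.
exists (fun s => (s == t)%:R); rewrite (bigD1 t) //= eqxx mul1r big1 ?addr0 //.
by move=> s /andP[_ /negbTE ->]; rewrite mul0r.
Qed.

Lemma monomial_idealP p :
  I p <-> {in msupp p, forall m, exists2 t, P t & (g t <= m)%MM}.
Proof.
split.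
  move=> [c ->] m /msupp_sum_le /flattenP [s /mapP [t]].
  rewrite mem_filter => /andP [Pt _] ->; rewrite (perm_mem (msuppMX _ _)).
  by move=> /mapP [m' _ ->]; exists t; rewrite // lem_addr.
move=> divisible; rewrite (mpolyE p).
elim: (msupp p) divisible => [|m s IHs] divisible.
  by rewrite big_nil; exact: monomial_ideal0.
rewrite big_cons; apply: monomial_idealD; last first.
  by apply: IHs => m' sm'; apply: divisible; rewrite inE sm' orbT.
have [t Pt le_gm] := divisible m (mem_head _ _).
by rewrite -mul_mpolyC; apply: monomial_idealMl; exact: monomial_idealX le_gm.
Qed.

Lemma monomial_ideal_gen_bounded : exists B, forall t i, (g t i <= B)%N.
Proof.
exists (\max_t \max_(i < n) g t i)%N => t i.
exact: leq_trans (leq_bigmax (F := g t) i) (leq_bigmax (F := fun t => \max_i g t i) t).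
Qed.

Variables (B : nat) (g_bounded : forall t i, (g t i <= B)%N).

Lemma monomial_ideal_cancelX q (c d : 'X_{1..n}) :
  (forall i, (0 < d i)%N -> (B <= c i)%N) -> I (q * 'X_[c + d]) -> I (q * 'X_[c]).
Proof.
move=> c_large /monomial_idealP divisible; apply/monomial_idealP => m.
rewrite (perm_mem (msuppMX _ _)) => /mapP [u qu ->].
have [|t Pt /mnm_lepP le_gt] := divisible (c + d + u)%MM.
  by rewrite mcoeff_msupp mcoeffMX -mcoeff_msupp.
exists t => //; apply/mnm_lepP => i; move: (le_gt i); rewrite !mnmDE.
have [-> | /c_large le_Bc _] := posnP (d i); first by rewrite addn0.
by rewrite (leq_trans (g_bounded t i)) // (leq_trans le_Bc) // leq_addr.
Qed.

Lemma radical_colon_radical_colon a b N : (B < N)%N -> forall p,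
  radical (colon (radical (colon I 'X_[a])) 'X_[b]) p <->
  radical (colon I 'X_[a + b *+ N]) p.
Proof.
move=> lt_BN p; split=> -[m].
  move=> [l]; rewrite /colon exprMX_mulX => Ipab.
  exists (m * l)%N; apply: (@monomial_ideal_cancelX _ _ (b *+ l)%MM).
    move=> i; rewrite mulmnE muln_gt0 mnmDE mulmnE => /andP [b_pos _].
    by rewrite (leq_trans (ltnW lt_BN)) // (leq_trans (leq_pmull _ b_pos)) ?leq_addl.
  move: (monomial_idealMl 'X_[b *+ N] Ipab).
  by rewrite mulrCA -mpolyXD addmA [(b *+ N + a)%MM]addmC.
move=> Ipabn; exists m, N; rewrite /colon exprMX_mulX.
have -> : (m * N = m * N.-1 + m)%N by rewrite -mulnSr prednK // (leq_trans _ lt_BN).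
by rewrite exprD -mulrA; apply: monomial_idealMl.
Qed.

Lemma assoc_radical_monomial_ideal_trans (J K : ideal_of k n) :
  assoc_radical I J -> assoc_radical J K -> assoc_radical I K.
Proof.
move=> [a [nIa HJ]] [b [nJb HK]]; exists (a + b *+ B.+1)%MM; split.
  move=> Iabn; apply/nJb/HJ; exists B.+1.
  by rewrite /colon mpolyXn -mpolyXD addmC.
move=> p; rewrite HK -radical_colon_radical_colon //.
by split=> -[m Jp]; exists m; apply/HJ.
Qed.

End MonomialIdeal.

Definition edge_mnm (n : nat) (w : 'I_n -> 'I_n -> nat) (ij : 'I_n * 'I_n) : 'X_{1..n} :=
  ((U_(ij.1) + U_(ij.2)) *+ w ij.1 ij.2)%MM.

Lemma weighted_edge_idealE (k : fieldType) (n : nat) (e : rel 'I_n)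
    (w : 'I_n -> 'I_n -> nat) (p : {mpoly k[n]}) :
  weighted_edge_ideal e w p <->
  monomial_ideal [pred ij | e ij.1 ij.2] (edge_mnm w) p.
Proof.
have edgeX i j : ('X_i * 'X_j : {mpoly k[n]}) ^+ w i j = 'X_[edge_mnm w (i, j)].
  by rewrite /edge_mnm -mpolyXn mpolyXD.
split=> -[c ->].
  exists (fun ij => c ij.1 ij.2); rewrite pair_big_dep.
  by apply: eq_big => [[i j] | [i j] _] //=; rewrite edgeX.
exists (fun i j => c (i, j)); rewrite pair_big_dep.
by apply: eq_big => [[i j] | [i j] _] //=; rewrite edgeX.
Qed.

Theorem lemma2p14 (k : fieldType) (n : nat) (e : rel 'I_n)
  (w : 'I_n -> 'I_n -> nat)
  (e_sym : forall i j, e i j = e j i) (e_irr : forall i, ~~ e i i)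
  (w_sym : forall i j, w i j = w j i)
  (w_pos : forall i j, e i j -> (0 < w i j)%N)
  (J K : ideal_of k n) :
  assoc_radical (@weighted_edge_ideal k n e w) J ->
  assoc_radical J K ->
  assoc_radical (@weighted_edge_ideal k n e w) K.
Proof.
set I : ideal_of k n := monomial_ideal [pred ij | e ij.1 ij.2] (edge_mnm w).
have I_edge p : I p <-> weighted_edge_ideal e w p by rewrite weighted_edge_idealE.
have [B edge_bounded] := monomial_ideal_gen_bounded (edge_mnm w).
move=> /(assoc_radical_ext (fun p => iff_sym (I_edge p))) IJ JK.
exact: assoc_radical_ext I_edge (assoc_radical_monomial_ideal_trans edge_bounded IJ JK).
Qed.
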